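(* Let $V$ be a complex vector space with inner products $\langle\cdot,\cdot\rangle_1,\langle\cdot,\cdot\rangle_2$ and induced norms $\|\cdot\|_1,\|\cdot\|_2$. The following are equivalent: (1) there is $c>0$ with $\langle\cdot,\cdot\rangle_2=c\langle\cdot,\cdot\rangle_1$; (2) there is $c>0$ with $\|\cdot\|_2=c\|\cdot\|_1$; (3) for all nonzero $x,y\in V$, the angle between $x$ and $y$ with respect to $\langle\cdot,\cdot\rangle_1$ equals that with respect to $\langle\cdot,\cdot\rangle_2$; (4) for all nonzero $x,y\in V$, the angle between $x,y$ with respect to $\langle\cdot,\cdot\rangle_1$ is $\pi/2$ iff it is $\pi/2$ with respect to $\langle\cdot,\cdot\rangle_2$ (i.e. $\mathrm{Re}\langle x,y\rangle_1=0\iff\mathrm{Re}\langle x,y\rangle_2=0$); (5) for all $x,y\in V$, $\langle x,y\rangle_1=0$ iff $\langle x,y\rangle_2=0$; (6) there exists $\theta_0\in(0,\pi)$ such that for all nonzero $x,y\in V$, the angle between $x$ and $y$ with respect to $\langle\cdot,\cdot\rangle_1$ is $\theta_0$ iff the angle between them with respect to $\langle\cdot,\cdot\rangle_2$ is $\theta_0$.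
   Context: Inner products are linear in the first argument and conjugate-linear in the second, with norm $\|x\|=\sqrt{\langle x,x\rangle}$. The (Euclidean) angle between nonzero vectors $x,y$ of a complex inner product space is the unique $\theta\in[0,\pi]$ with $\cos\theta=\mathrm{Re}\,\langle x,y\rangle/(\|x\|\|y\|)$. *)

From mathcomp Require Import all_boot all_order all_algebra.
From mathcomp Require Import complex.
From mathcomp Require Import all_classical all_reals all_analysis.
Set Implicit Arguments. Unset Strict Implicit. Unset Printing Implicit Defensive.
Import Order.TTheory GRing.Theory Num.Theory.
Local Open Scope ring_scope.
Local Open Scope complex_scope.

Definition reC (R : realType) (z : R[i]) : R := complex.Re z.

(* In R[i], [0 < z] means z is a positive real. *)
Definition is_inner_product (R : realType) (V : lmodType R[i])
  (ip : V -> V -> R[i]) : Prop :=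
  [/\ forall (a : R[i]) (x y z : V), ip (a *: x + y) z = a * ip x z + ip y z,
      forall x y : V, ip y x = (ip x y)^*
    & forall x : V, x != 0 -> 0 < ip x x].

Definition ipnorm (R : realType) (V : lmodType R[i]) (ip : V -> V -> R[i])
  (x : V) : R := Num.sqrt (reC (ip x x)).

Definition ipangle (R : realType) (V : lmodType R[i]) (ip : V -> V -> R[i])
  (x y : V) : R :=
  acos (reC (ip x y) / (ipnorm ip x * ipnorm ip y)).

(* Everything reduces to the real parts g_k(x, y) = Re <x, y>_k, because
   Im <x, y> = Re <x, i y>.  Suppose g_2(y', x) = 0 whenever y' is the
   g_1-orthogonal component g_1(x, x) y - g_1(y, x) x of y.  Then
   g_2(y, x) = r(x) g_1(y, x) with r(x) = g_2(x, x) / g_1(x, x), and the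
   symmetry of g_1, g_2 forces r(x) = r(z) whenever g_1(x, z) <> 0, hence for
   all nonzero x, z (pass through x + z).  Conditions (4), (5) and (6) all
   yield this hypothesis.  For (6), given g_1(w, x) = 0, the two vectors
   z = cos t |w| x +- sin t |x| w make the angle t with x for <.,.>_1, so also
   for <.,.>_2; comparing the two resulting identities forces g_2(w, x) = 0. *)

From mathcomp Require Import all_boot all_order all_algebra.
From mathcomp Require Import complex.
From mathcomp Require Import all_classical all_reals all_analysis.
From mathcomp Require Import ring lra.
Set Implicit Arguments. Unset Strict Implicit. Unset Printing Implicit Defensive.
Import Order.TTheory GRing.Theory Num.Theory.
Local Open Scope ring_scope.
Local Open Scope complex_scope.

Lemma complex_eq (R : rcfType) (a b : R[i]) :
  complex.Re a = complex.Re b -> complex.Im a = complex.Im b -> a = b.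
Proof. by case: a => ? ?; case: b => ? ? /= -> ->. Qed.

Lemma Re_realCM (R : rcfType) (k : R) (a : R[i]) :
  complex.Re (k%:C * a) = k * complex.Re a.
Proof. by case: a => ? ? /=; rewrite mul0r subr0. Qed.

Lemma Im_realCM (R : rcfType) (k : R) (a : R[i]) :
  complex.Im (k%:C * a) = k * complex.Im a.
Proof. by case: a => ? ? /=; rewrite mul0r addr0. Qed.

Section InnerProduct.
Variables (R : realType) (V : lmodType R[i]) (ip : V -> V -> R[i]).
Hypothesis ipP : is_inner_product ip.

Local Notation re x y := (reC (ip x y)).

Lemma ipDl x y z : ip (x + y) z = ip x z + ip y z.
Proof.
move: ipP; rewrite /is_inner_product => -[lin _ _].
by have := lin 1 x y z; rewrite scale1r mul1r.
Qed.

Lemma ip0l z : ip 0 z = 0.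
Proof. by apply: (addrI (ip 0 z)); rewrite -ipDl !addr0. Qed.

Lemma ipZl a x z : ip (a *: x) z = a * ip x z.
Proof.
move: ipP; rewrite /is_inner_product => -[lin _ _].
by rewrite -[_ *: x]addr0 lin ip0l addr0.
Qed.

Lemma ip_conj x y : ip y x = (ip x y)^*.
Proof. by move: ipP; rewrite /is_inner_product => -[_ conj _]. Qed.

Lemma ip0r z : ip z 0 = 0.
Proof. by rewrite ip_conj ip0l conjc0. Qed.

Lemma ipZr a x z : ip z (a *: x) = a^* * ip z x.
Proof. by rewrite ip_conj ipZl rmorphM /= -ip_conj. Qed.

Lemma ip_real x : ip x x = (re x x)%:C.
Proof.
apply: complex_eq => //=; have /(congr1 (@complex.Im R)) := ip_conj x x.
by case: (ip x x) => a b /=; lra.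
Qed.

Lemma reipC x y : re x y = re y x.
Proof. by rewrite /reC [ip x y]ip_conj; case: (ip y x). Qed.

Lemma reipDl x y z : re (x + y) z = re x z + re y z.
Proof. by rewrite /reC ipDl raddfD. Qed.

Lemma reipDr x y z : re z (x + y) = re z x + re z y.
Proof. by rewrite reipC reipDl !(reipC z). Qed.

Lemma reipZl (a : R) x z : re (a%:C *: x) z = a * re x z.
Proof. by rewrite /reC ipZl Re_realCM. Qed.

Lemma reipZr (a : R) x z : re z (a%:C *: x) = a * re z x.
Proof. by rewrite reipC reipZl reipC. Qed.

Lemma reip0l z : re 0 z = 0. Proof. by rewrite /reC ip0l. Qed.

Lemma reip0r z : re z 0 = 0. Proof. by rewrite /reC ip0r. Qed.

Lemma imip x y : complex.Im (ip x y) = re x ('i *: y).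
Proof. by rewrite /reC ipZr; case: (ip x y) => a b; simpc. Qed.

Lemma reip_gt0 x : x != 0 -> 0 < re x x.
Proof.
move: ipP; rewrite /is_inner_product => -[_ _ pos] /pos.
by rewrite ltcE => /andP[].
Qed.

Lemma reip_ge0 x : 0 <= re x x.
Proof. by have [->|/reip_gt0/ltW //] := eqVneq x 0; rewrite reip0l. Qed.

Lemma ipnorm_sqr x : ipnorm ip x ^+ 2 = re x x.
Proof. by rewrite sqr_sqrtr // reip_ge0. Qed.

Lemma ipnorm_gt0 x : x != 0 -> 0 < ipnorm ip x.
Proof. by move/reip_gt0; rewrite sqrtr_gt0. Qed.

Lemma reip_Cauchy_Schwarz x y : re x y ^+ 2 <= re x x * re y y.
Proof.
have [->|y0] := eqVneq y 0; first by rewrite reip0r reip0r mulr0 expr0n.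
have yy_gt0 := reip_gt0 y0.
have := reip_ge0 (x + (- (re x y / re y y))%:C *: y).
rewrite !(reipDl, reipDr, reipZl, reipZr) (reipC y x).
set E := (X in 0 <= X) => E_ge0.
rewrite -subr_ge0; have -> : re x x * re y y - re x y ^+ 2 = re y y * E.
  by rewrite /E; field; rewrite gt_eqF.
by rewrite mulr_ge0 // ltW.
Qed.

Lemma reip_ratio_bound x y :
  -1 <= re x y / (ipnorm ip x * ipnorm ip y) <= 1.
Proof.
set N := ipnorm ip x * ipnorm ip y.
have [->|N0] := eqVneq N 0; first by rewrite invr0 mulr0 lerN10 ler01.
have N_gt0 : 0 < N by rewrite lt_def N0 mulr_ge0 ?sqrtr_ge0.
have : re x y ^+ 2 <= N ^+ 2 by rewrite exprMn !ipnorm_sqr reip_Cauchy_Schwarz.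
rewrite -{1}[re x y](divfK N0) exprMn -[X in _ <= X]mul1r ler_pM2r ?exprn_gt0 //.
set r := _ / N; nra.
Qed.

Lemma ipangleP x y t : 0 <= t <= pi ->
  ipangle ip x y = t <-> re x y / (ipnorm ip x * ipnorm ip y) = cos t.
Proof.
move=> t_in; rewrite /ipangle; split => [<-|->]; last by rewrite cosK // in_itv.
by rewrite acosK // in_itv /= reip_ratio_bound.
Qed.

Lemma ipangle_sqr z x t : 0 <= t <= pi -> z != 0 -> x != 0 ->
  ipangle ip z x = t -> re z x ^+ 2 = cos t ^+ 2 * re x x * re z z.
Proof.
move=> t_in z0 x0 /(ipangleP _ _ t_in) cos_t.
have -> : re z x = cos t * (ipnorm ip z * ipnorm ip x).
  by rewrite -cos_t divfK // mulf_neq0 // gt_eqF // ipnorm_gt0.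
by rewrite !exprMn !ipnorm_sqr; ring.
Qed.

Lemma ipangle_orth_comb w x e t : 0 <= t <= pi -> w != 0 -> x != 0 ->
  re w x = 0 -> e ^+ 2 = sin t ^+ 2 ->
  let z := (cos t * ipnorm ip w)%:C *: x + (e * ipnorm ip x)%:C *: w in
  z != 0 /\ ipangle ip z x = t.
Proof.
move=> t_in w0 x0 wx0 e2 z.
have [nw_gt0 nx_gt0] := (ipnorm_gt0 w0, ipnorm_gt0 x0).
have zx : re z x = cos t * ipnorm ip w * ipnorm ip x ^+ 2.
  by rewrite reipDl !reipZl wx0 ipnorm_sqr mulr0 addr0.
have zz : re z z = (ipnorm ip x * ipnorm ip w) ^+ 2.
  rewrite !(reipDl, reipDr, reipZl, reipZr) (reipC x w) wx0 -!ipnorm_sqr.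
  have ce : cos t ^+ 2 + e ^+ 2 = 1 by rewrite e2 cos2Dsin2.
  transitivity ((ipnorm ip x * ipnorm ip w) ^+ 2 * (cos t ^+ 2 + e ^+ 2)).
    by ring.
  by rewrite ce mulr1.
have nz : ipnorm ip z = ipnorm ip x * ipnorm ip w.
  by rewrite /ipnorm zz sqrtr_sqr ger0_norm // mulr_ge0 // ltW.
split.
  apply/eqP => z0; move: zz; rewrite z0 reip0l => /esym/eqP.
  by rewrite sqrf_eq0 mulf_eq0 !gt_eqF.
by apply/ipangleP => //; rewrite zx nz; field; rewrite !gt_eqF.
Qed.

End InnerProduct.

(* With e = +-s: the difference of the two identities is 4 t s^3 p q A b = 0,
   and for t = 0 either identity reads (s p b)^2 = 0. *)
Lemma cross_term_eq0 (R : realFieldType) (t s p q A b D : R) :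
  t ^+ 2 + s ^+ 2 = 1 -> 0 < s -> 0 < p -> 0 < q -> 0 < A ->
  (forall e, e ^+ 2 = s ^+ 2 ->
     (t * q * A + e * p * b) ^+ 2
     = t ^+ 2 * A * ((t * q) ^+ 2 * A + 2 * (t * q) * (e * p) * b + (e * p) ^+ 2 * D)) ->
  b = 0.
Proof.
move=> ts s_gt0 p_gt0 q_gt0 A_gt0 E.
move: (E s erefl) (E (- s) (sqrrN s)) => /eqP; rewrite -subr_eq0 => /eqP Ep.
move=> /eqP; rewrite -subr_eq0 => /eqP Em.
have := congr2 (fun u v : R => u - v) Ep Em; rewrite subrr => Epm.
have : t * b * (4 * q * A * p * (s * (1 - t ^+ 2))) = 0 by rewrite -[RHS]Epm; ring.
have -> : 1 - t ^+ 2 = s ^+ 2 by lra.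
have k_neq0 : 4 * q * A * p * (s * s ^+ 2) != 0.
  by rewrite gt_eqF // !mulr_gt0 ?exprn_gt0 ?ltr0n.
move/eqP; rewrite mulf_eq0 (negbTE k_neq0) orbF.
rewrite mulf_eq0 => /orP[/eqP t0|/eqP //].
move: Ep; rewrite t0 !(mul0r, add0r, expr0n) subr0 => /eqP.
by rewrite sqrf_eq0 !mulf_eq0 (gt_eqF s_gt0) (gt_eqF p_gt0) => /eqP.
Qed.

Definition ip_scaled (R : realType) (V : lmodType R[i])
  (ip1 ip2 : V -> V -> R[i]) : Prop :=
  exists c : R, 0 < c /\ forall x y : V, ip2 x y = c%:C * ip1 x y.

Section TwoInnerProducts.
Variables (R : realType) (V : lmodType R[i]) (ip1 ip2 : V -> V -> R[i]).
Hypotheses (H1 : is_inner_product ip1) (H2 : is_inner_product ip2).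

Local Notation re1 x y := (reC (ip1 x y)).
Local Notation re2 x y := (reC (ip2 x y)).

Lemma ip_eq_of_reip_eq k : (forall x y, re2 x y = k * re1 x y) ->
  forall x y, ip2 x y = k%:C * ip1 x y.
Proof.
move=> h x y; apply: complex_eq; first by rewrite Re_realCM; exact: h.
by rewrite Im_realCM (imip H1) (imip H2); exact: h.
Qed.

Section ProjectionCompatible.
(* [proj] says that g_1(x, x) y - g_1(y, x) x, the g_1-orthogonal component of
   y relative to x, is also g_2-orthogonal to x. *)
Hypothesis proj : forall x y, re2 y x * re1 x x = re2 x x * re1 y x.

Let ratio x := re2 x x / re1 x x.

Lemma reip2_ratio x y : x != 0 -> re2 y x = ratio x * re1 y x.
Proof. by move=> x0; rewrite /ratio mulrAC -proj mulfK // gt_eqF // (reip_gt0 H1). Qed.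

Lemma ratio_eq x z : re1 x z != 0 -> ratio x = ratio z.
Proof.
move=> xz0; apply: (mulIf xz0).
have x0 : x != 0 by apply: contraNneq xz0 => ->; rewrite (reip0l H1).
have z0 : z != 0 by apply: contraNneq xz0 => ->; rewrite (reip0r H1).
by rewrite -(reip2_ratio x z0) (reipC H1 x z) -(reip2_ratio z x0) reipC.
Qed.

Lemma ratio_const x z : x != 0 -> z != 0 -> ratio x = ratio z.
Proof.
move=> x0 z0; have [xz0|] := eqVneq (re1 x z) 0; last exact: ratio_eq.
have -> : ratio x = ratio (x + z).
  by apply: ratio_eq; rewrite (reipDr H1) xz0 addr0 gt_eqF // (reip_gt0 H1).
symmetry; apply: ratio_eq.
by rewrite (reipDr H1) (reipC H1 z x) xz0 add0r gt_eqF // (reip_gt0 H1).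
Qed.

Lemma ip_scaled_of_proj : ip_scaled ip1 ip2.
Proof.
have [[x0 x0_neq0]|V0] := pselect (exists x0 : V, x0 != 0).
  exists (ratio x0); split; first by rewrite divr_gt0 // reip_gt0.
  apply: ip_eq_of_reip_eq => y x.
  have [->|x_neq0] := eqVneq x 0; first by rewrite (reip0r H1) (reip0r H2) mulr0.
  by rewrite (reip2_ratio _ x_neq0) (ratio_const x0_neq0 x_neq0).
exists 1; split=> // x y.
have -> : x = 0 by apply/eqP/negPn/negP => x_neq0; apply: V0; exists x.
by rewrite (ip0l H1) (ip0l H2) mulr0.
Qed.

End ProjectionCompatible.

Lemma ip_scaled_of_reip_orth :
  (forall x y, re1 x y = 0 -> re2 x y = 0) -> ip_scaled ip1 ip2.
Proof.
move=> orth; apply: ip_scaled_of_proj => x y.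
have := orth ((re1 x x)%:C *: y + (- re1 y x)%:C *: x) x.
rewrite !(reipDl H1, reipZl H1, reipDl H2, reipZl H2) !mulNr (mulrC (re1 x x)).
move=> /(_ (subrr _)) /eqP; rewrite subr_eq0 => /eqP.
by rewrite mulrC [RHS]mulrC.
Qed.

Lemma ip_scaled_of_orth :
  (forall x y, ip1 x y = 0 -> ip2 x y = 0) -> ip_scaled ip1 ip2.
Proof.
move=> orth; apply: ip_scaled_of_proj => x y.
have := orth (ip1 x x *: y + (- ip1 y x) *: x) x.
rewrite !(ipDl H1, ipZl H1, ipDl H2, ipZl H2) mulNr mulrC subrr.
move=> /(_ erefl) /(congr1 (@complex.Re R)).
rewrite raddfD /= (ip_real H1 x) (ip_real H2 x) mulNr raddfN /= Re_realCM.
rewrite [ip1 y x * _]mulrC Re_realCM => /eqP; rewrite subr_eq0 => /eqP e.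
by rewrite mulrC; exact: e.
Qed.

Lemma ip_scaled_of_ipangle_eq th : 0 < th < pi ->
  (forall x y, x != 0 -> y != 0 -> ipangle ip1 x y = th -> ipangle ip2 x y = th) ->
  ip_scaled ip1 ip2.
Proof.
move=> /andP[th_gt0 th_ltpi] hth; apply: ip_scaled_of_reip_orth => w x wx0.
have [->|w0] := eqVneq w 0; first by rewrite (reip0l H2).
have [->|x0] := eqVneq x 0; first by rewrite (reip0r H2).
have th_in : 0 <= th <= pi by rewrite !ltW.
apply: (@cross_term_eq0 _ (cos th) (sin th) (ipnorm ip1 x) (ipnorm ip1 w)
  (re2 x x) _ (re2 w w)).
- exact: cos2Dsin2.
- by rewrite sin_gt0_pi // th_gt0.
- exact: ipnorm_gt0.
- exact: ipnorm_gt0.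
- exact: reip_gt0.
move=> e e2; have [z0 z_th] := ipangle_orth_comb H1 th_in w0 x0 wx0 e2.
move: (ipangle_sqr H2 th_in z0 x0 (hth _ _ z0 x0 z_th)).
rewrite !(reipDl H2, reipDr H2, reipZl H2, reipZr H2) (reipC H2 x w).
by move=> ->; ring.
Qed.

Lemma ipnorm_scaled c : 0 < c -> (forall x y, ip2 x y = c%:C * ip1 x y) ->
  forall x, ipnorm ip2 x = Num.sqrt c * ipnorm ip1 x.
Proof. by move=> c_gt0 e x; rewrite /ipnorm /reC e Re_realCM sqrtrM // ltW. Qed.

Lemma ip_scaled_of_ipnorm_scaled c : 0 < c ->
  (forall x, ipnorm ip2 x = c * ipnorm ip1 x) -> ip_scaled ip1 ip2.
Proof.
move=> c_gt0 e; exists (c ^+ 2); split; first by rewrite exprn_gt0.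
apply: ip_eq_of_reip_eq => x y.
have sq z : re2 z z = c ^+ 2 * re1 z z by rewrite -!ipnorm_sqr // e exprMn.
have := sq (x + y); rewrite !(reipDl H1, reipDr H1, reipDl H2, reipDr H2) !sq.
by rewrite (reipC H1 y x) (reipC H2 y x); lra.
Qed.

Lemma ipangle_eq_of_scaled c : 0 < c -> (forall x y, ip2 x y = c%:C * ip1 x y) ->
  forall x y, ipangle ip1 x y = ipangle ip2 x y.
Proof.
move=> c_gt0 e x y; rewrite /ipangle !(ipnorm_scaled c_gt0 e) /reC e Re_realCM.
congr acos; set a := ipnorm ip1 x; set b := ipnorm ip1 y.
have -> : Num.sqrt c * a * (Num.sqrt c * b) = c * (a * b).
  by rewrite mulrACA -expr2 sqr_sqrtr // ltW.
by rewrite -mulf_div divff ?mul1r // gt_eqF.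
Qed.

Lemma ip_eq0_iff_of_scaled c : 0 < c -> (forall x y, ip2 x y = c%:C * ip1 x y) ->
  forall x y, ip1 x y = 0 <-> ip2 x y = 0.
Proof.
move=> c_gt0 e x y; rewrite e; split=> [->|/eqP]; first by rewrite mulr0.
by rewrite mulf_eq0 => /orP[/eqP/complexI c0|/eqP //]; rewrite c0 ltxx in c_gt0.
Qed.

End TwoInnerProducts.

Theorem mainTheorem10 (R : realType) (V : lmodType R[i])
  (ip1 ip2 : V -> V -> R[i]) :
  is_inner_product ip1 -> is_inner_product ip2 ->
  [<->
    (* (1) *) exists c : R, 0 < c /\ forall x y : V, ip2 x y = c%:C * ip1 x y;
    (* (2) *) exists c : R, 0 < c /\ forall x : V, ipnorm ip2 x = c * ipnorm ip1 x;
    (* (3) *) forall x y : V, x != 0 -> y != 0 -> ipangle ip1 x y = ipangle ip2 x y;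
    (* (4) *) forall x y : V, x != 0 -> y != 0 ->
                (ipangle ip1 x y = pi / 2 <-> ipangle ip2 x y = pi / 2);
    (* (5) *) forall x y : V, ip1 x y = 0 <-> ip2 x y = 0;
    (* (6) *) exists theta0 : R, 0 < theta0 < pi /\
                forall x y : V, x != 0 -> y != 0 ->
                  (ipangle ip1 x y = theta0 <-> ipangle ip2 x y = theta0)].
Proof.
move=> H1 H2.
have pihalf_in : 0 < (pi : R) / 2 < pi.
  by have := @pi_gt0 R => pi_gt0; apply/andP; split; lra.
tfae.
- move=> [c [c_gt0 e]]; exists (Num.sqrt c).
  by split; [rewrite sqrtr_gt0 | exact: ipnorm_scaled].
- move=> [c [c_gt0 /(ip_scaled_of_ipnorm_scaled H1 H2 c_gt0) [k [k_gt0 e]]]] x y _ _.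
  exact: (ipangle_eq_of_scaled k_gt0 e).
- by move=> h x y x0 y0; rewrite h.
- move=> h4; have [c [c_gt0 e]] := ip_scaled_of_ipangle_eq H1 H2 pihalf_in
    (fun x y x0 y0 => (h4 x y x0 y0).1).
  exact: (ip_eq0_iff_of_scaled c_gt0 e).
- move=> /(fun h5 => ip_scaled_of_orth H1 H2 (fun x y => (h5 x y).1)) [c [c_gt0 e]].
  by exists (pi / 2); split=> // x y _ _; rewrite (ipangle_eq_of_scaled c_gt0 e).
- move=> [th [th_in h6]]; apply: (ip_scaled_of_ipangle_eq H1 H2 th_in).
  by move=> x y x0 y0 /(h6 x y x0 y0).
Qed.
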